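(* Let $X$ be a set and let $\mathcal{L}$ and $\mathcal{R}$ be two dual nests on $X$. (1) If $\mathcal{L}$ satisfies (C2) and $\mathcal{R}$ satisfies (C2)*, then $\mathcal{T}_{\mathcal{L}\cup\mathcal{R}}\subseteq\mathcal{T}_{in}^{\mathcal{L}}$. (2) If $\mathcal{L}$ satisfies (C3) and $\mathcal{R}$ satisfies (C3)*, then $\mathcal{T}_{\mathcal{L}\cup\mathcal{R}}=\mathcal{T}_{in}^{\mathcal{L}}$.
   Context: A nest on $X$ is a family of subsets of $X$ totally ordered by inclusion. For a nest $\mathcal{N}$ define $x\triangleleft_{\mathcal{N}} y$ iff there exists $N\in\mathcal{N}$ with $x\in N$, $y\notin N$. Let $x\trianglelefteq_{\mathcal{L}} y$ iff $x=y$ or $x\triangleleft_{\mathcal{L}} y$. Nests $\mathcal{L},\mathcal{R}$ are dual if for all $x,y\in X$: $x\triangleleft_{\mathcal{L}} y$ iff $y\triangleleft_{\mathcal{R}} x$. Suprema and infima are taken with respect to $\trianglelefteq_{\mathcal{L}}$. (C2): every $L\in\mathcal{L}$ has a supremum $\sup L\in X-L$. (C3): for each $x\in X$ there is $L\in\mathcal{L}$ with $\sup L=x\in X-L$, and (C2) holds. (C2)*: every $R\in\mathcal{R}$ has an infimum $\inf R\in X-R$. (C3)*: for each $x\in X$ there is $R\in\mathcal{R}$ with $\inf R=x\in X-R$, and (C2)* holds. For $k\in X$ let ${\uparrow}k=\{y : k\trianglelefteq_{\mathcal{L}} y\}$ and ${\downarrow}k=\{y : y\trianglelefteq_{\mathcal{L}}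 k\}$. The lower topology $\mathcal{T}_l$ is generated by the subbase $\{X-{\uparrow}k : k\in X\}$, the upper topology $\mathcal{T}_U$ by the subbase $\{X-{\downarrow}k : k\in X\}$, and $\mathcal{T}_{in}^{\mathcal{L}}=\mathcal{T}_U\vee\mathcal{T}_l$ is the smallest topology containing both. $\mathcal{T}_{\mathcal{L}\cup\mathcal{R}}$ is the topology generated by $\mathcal{L}\cup\mathcal{R}$ as a subbase. *)

Section NestDefs.
Variable X : Type.

Definition subset (A B : X -> Prop) : Prop := forall x, A x -> B x.

Definition nest (N : (X -> Prop) -> Prop) : Prop :=
  forall A B, N A -> N B -> subset A B \/ subset B A.

Definition nlt (N : (X -> Prop) -> Prop) (x y : X) : Prop :=
  exists A, N A /\ A x /\ ~ A y.

Definition nle (N : (X -> Prop) -> Prop) (x y : X) : Prop :=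
  x = y \/ nlt N x y.

Definition dual (L R : (X -> Prop) -> Prop) : Prop :=
  forall x y, nlt L x y <-> nlt R y x.

Definition is_sup (L : (X -> Prop) -> Prop) (A : X -> Prop) (s : X) : Prop :=
  (forall a, A a -> nle L a s) /\
  (forall u, (forall a, A a -> nle L a u) -> nle L s u).

Definition is_inf (L : (X -> Prop) -> Prop) (A : X -> Prop) (s : X) : Prop :=
  (forall a, A a -> nle L s a) /\
  (forall u, (forall a, A a -> nle L u a) -> nle L u s).

Definition C2 (L : (X -> Prop) -> Prop) : Prop :=
  forall A, L A -> exists s, is_sup L A s /\ ~ A s.

Definition C3 (L : (X -> Prop) -> Prop) : Prop :=
  (forall x, exists A, L A /\ is_sup L A x /\ ~ A x) /\ C2 L.

Definition C2star (L R : (X -> Prop) -> Prop) : Prop :=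
  forall A, R A -> exists s, is_inf L A s /\ ~ A s.

Definition C3star (L R : (X -> Prop) -> Prop) : Prop :=
  (forall x, exists A, R A /\ is_inf L A x /\ ~ A x) /\ C2star L R.

Definition up (L : (X -> Prop) -> Prop) (k : X) : X -> Prop :=
  fun y => nle L k y.
Definition down (L : (X -> Prop) -> Prop) (k : X) : X -> Prop :=
  fun y => nle L y k.

Definition union_fam (F : (X -> Prop) -> Prop) : X -> Prop :=
  fun x => exists A, F A /\ A x.

Definition is_topology (T : (X -> Prop) -> Prop) : Prop :=
  T (fun _ => True) /\
  (forall F, (forall A, F A -> T A) -> T (union_fam F)) /\
  (forall A B, T A -> T B -> T (fun x => A x /\ B x)).

Definition generated (S : (X -> Prop) -> Prop) : (X -> Prop) -> Prop :=
  fun U => forall T, is_topology T -> (forall A, S A -> T A) -> T U.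

Definition T_lower (L : (X -> Prop) -> Prop) : (X -> Prop) -> Prop :=
  generated (fun A => exists k, A = (fun y => ~ up L k y)).

Definition T_upper (L : (X -> Prop) -> Prop) : (X -> Prop) -> Prop :=
  generated (fun A => exists k, A = (fun y => ~ down L k y)).

Definition T_in (L : (X -> Prop) -> Prop) : (X -> Prop) -> Prop :=
  generated (fun A => T_upper L A \/ T_lower L A).

Definition T_LR (L R : (X -> Prop) -> Prop) : (X -> Prop) -> Prop :=
  generated (fun A => L A \/ R A).

End NestDefs.

Arguments subset {X}.
Arguments nest {X}.
Arguments nlt {X}.
Arguments nle {X}.
Arguments dual {X}.
Arguments is_sup {X}.
Arguments is_inf {X}.
Arguments C2 {X}.
Arguments C3 {X}.
Arguments C2star {X}.
Arguments C3star {X}.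
Arguments up {X}.
Arguments down {X}.
Arguments union_fam {X}.
Arguments is_topology {X}.
Arguments generated {X}.
Arguments T_lower {X}.
Arguments T_upper {X}.
Arguments T_in {X}.
Arguments T_LR {X}.

(** A member [A] of the nest [L] whose supremum [s] lies outside [A] is exactly
    [X - up s]: a point not below [s] lies in [A] because [s] is the least
    upper bound of [A], and conversely [A] cannot contain a point [y] with
    [s <| y], since the nest member separating [s] from [y] would then be
    comparable with [A] in neither direction.  So (C2) puts [L] into the lower
    topology.  Duality turns infima for [<|=_L] into suprema for [<|=_R] and
    [down_L s] into [up_R s], so (C2)* likewise puts [R] into the upper
    topology.  Under (C3) and (C3)* every [X - up k] and every [X - down k]
    arises in this way, which gives the reverse inclusion. *)

From Stdlib Require Import FunctionalExtensionality PropExtensionality Classical.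

Section Generated.
Context {X : Type}.
Implicit Types (S T : (X -> Prop) -> Prop) (A U : X -> Prop).

Lemma generated_is_topology S : is_topology (generated S).
Proof.
  split; [| split].
  - intros T hT _; exact (proj1 hT).
  - intros F hF T hT hS. apply (proj1 (proj2 hT)).
    intros A FA; exact (hF A FA T hT hS).
  - intros A B hA hB T hT hS.
    apply (proj2 (proj2 hT)); [exact (hA T hT hS) | exact (hB T hT hS)].
Qed.

Lemma generated_least S T :
  is_topology T -> (forall A, S A -> T A) -> forall U, generated S U -> T U.
Proof. intros hT hS U hU; exact (hU T hT hS). Qed.

Lemma generated_subbase S A : S A -> generated S A.
Proof. intros hA T _ hS; exact (hS A hA). Qed.

Lemma generated_mono S S' :
  (forall A, S A -> generated S' A) -> forall U, generated S U -> generated S' U.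
Proof. apply generated_least, generated_is_topology. Qed.

End Generated.

Section Nests.
Context {X : Type}.
Implicit Types (L R : (X -> Prop) -> Prop) (A B : X -> Prop).

Lemma member_eq_not_up_sup L A s :
  nest L -> L A -> is_sup L A s -> ~ A s -> A = (fun y => ~ up L s y).
Proof.
  intros hL LA [_ s_least] nAs.
  apply functional_extensionality; intro y; apply propositional_extensionality.
  unfold up, nle; split.
  - intros Ay [<- | [B [LB [Bs nBy]]]]; [contradiction |].
    destruct (hL B A LB LA) as [BA | AB]; [exact (nAs (BA s Bs)) | exact (nBy (AB y Ay))].
  - intros s_not_le_y. apply NNPP; intro nAy. apply s_not_le_y, s_least.
    intros a Aa; right; exists A; auto.
Qed.

Lemma dual_nle L R x y : dual L R -> nle L x y <-> nle R y x.
Proof.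
  intros hd; unfold nle; rewrite (hd x y).
  split; intros [e | h]; auto.
Qed.

Lemma dual_is_inf L R B s : dual L R -> is_inf L B s -> is_sup R B s.
Proof.
  intros hd [s_lower s_greatest]; split.
  - intros b Bb; apply (dual_nle L R); auto.
  - intros u u_upper. apply (dual_nle L R); auto.
    apply s_greatest; intros b Bb; apply (dual_nle L R); auto.
Qed.

Lemma dual_down L R s : dual L R -> down L s = up R s.
Proof.
  intros hd. apply functional_extensionality; intro y.
  apply propositional_extensionality; exact (dual_nle L R y s hd).
Qed.

Lemma member_eq_not_down_inf L R B s :
  nest R -> dual L R -> R B -> is_inf L B s -> ~ B s -> B = (fun y => ~ down L s y).
Proof.
  intros hR hd RB hs nBs. rewrite (dual_down L R s hd).
  exact (member_eq_not_up_sup R B s hR RB (dual_is_inf L R B s hd hs) nBs).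
Qed.

Lemma T_in_not_up L k : T_in L (fun y => ~ up L k y).
Proof. apply generated_subbase; right; apply generated_subbase; exists k; reflexivity. Qed.

Lemma T_in_not_down L k : T_in L (fun y => ~ down L k y).
Proof. apply generated_subbase; left; apply generated_subbase; exists k; reflexivity. Qed.

Lemma T_LR_sub_T_in L R :
  nest L -> nest R -> dual L R -> C2 L -> C2star L R ->
  forall U, T_LR L R U -> T_in L U.
Proof.
  intros hL hR hd c2 c2s. apply generated_least; [apply generated_is_topology |].
  intros A [LA | RA].
  - destruct (c2 A LA) as [s [hs nAs]].
    rewrite (member_eq_not_up_sup L A s hL LA hs nAs). apply T_in_not_up.
  - destruct (c2s A RA) as [s [hs nAs]].
    rewrite (member_eq_not_down_inf L R A s hR hd RA hs nAs). apply T_in_not_down.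
Qed.

Lemma T_in_sub_T_LR L R :
  nest L -> nest R -> dual L R -> C3 L -> C3star L R ->
  forall U, T_in L U -> T_LR L R U.
Proof.
  intros hL hR hd [sup_of_member _] [inf_of_member _].
  apply generated_mono; intros A [hA | hA]; revert A hA; apply generated_mono.
  - intros A [k ->]. destruct (inf_of_member k) as [B [RB [hk nBk]]].
    rewrite <- (member_eq_not_down_inf L R B k hR hd RB hk nBk).
    apply generated_subbase; right; exact RB.
  - intros A [k ->]. destruct (sup_of_member k) as [B [LB [hk nBk]]].
    rewrite <- (member_eq_not_up_sup L B k hL LB hk nBk).
    apply generated_subbase; left; exact LB.
Qed.

End Nests.

Theorem theorem3p3 (X : Type) (L R : (X -> Prop) -> Prop)
  (hL : nest L) (hR : nest R) (hdual : dual L R) :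
  ((C2 L -> C2star L R -> forall U, T_LR L R U -> T_in L U) /\
   (C3 L -> C3star L R -> forall U, T_LR L R U <-> T_in L U)).
Proof.
  split.
  - exact (T_LR_sub_T_in L R hL hR hdual).
  - intros c3 c3s U; split.
    + exact (T_LR_sub_T_in L R hL hR hdual (proj2 c3) (proj2 c3s) U).
    + exact (T_in_sub_T_LR L R hL hR hdual c3 c3s U).
Qed.
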